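(* Let $n,m$ be positive integers. Consider the map sending $f\in\mathcal{A}([n];m)$ (a $P$-partition of the $n$-element antichain with $|f(i)|\le m$ for all $i$) to the following sequence of card placements of a lazy $m$-shelf shuffler: for $i=1,2,\ldots,n$ in turn, card $i$ is placed on shelf $|f(i)|$, on top of the cards already on that shelf if $f(i)$ is barred, and below the cards already on that shelf if $f(i)$ is unbarred. This map is a bijection between $\mathcal{A}([n];m)$ and the set of outcomes (sequences of card placements) of the lazy $m$-shelf shuffler, and the resulting order of the deck from top to bottom is $\pi(f)(1),\pi(f)(2),\ldots,\pi(f)(n)$, where $\pi(f)$ is the sorting permutation of $f$.
   Context: Integers are written $\ldots,\bar 2,\bar 1,0,1,2,\ldots$ with $\bar i=-i$, totally ordered by $0<_{\mathbb Z}\bar1<_{\mathbb Z}1<_{\mathbb Z}\bar2<_{\mathbb Z}2<_{\mathbb Z}\cdots$, and $|\bar j|=j$. A $P$-partition of the antichain $[n]$ (no relations) is any function $f:[n]\to\mathbb Z$; $\mathcal{A}([n];m)$ is the set of such $f$ with $|f(i)|\le m$ for all $i$. The sorting permutation $\pi=\pi(f)\in S_n$ is the unique permutation (viewed as the total order $\pi(1)<_\pi\cdots<_\pi\pi(n)$) such that: if $f(i)<_{\mathbb Z}f(j)$ then $i<_\pi j$; if $i<j$ and $f(i)=f(j)\in\{0,1,2,\ldots\}$ then $i<_\pi j$; if $i<j$ and $f(i)=f(j)\in\{\bar1,\bar2,\ldots\}$ then $j<_\pi i$. Lazy $m$-shelf shuffler: a deck with cards labeled $1,\ldots,n$ from top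 to bottom; cards are taken in order $1,2,\ldots,n$; each card is placed either on shelf $0$ (always below the cards already there) or on one of shelves $1,\ldots,m$, either on top of or below the cards already there (so there are $2m+1$ choices per card). At the end the piles are stacked with shelf $0$ on top, then shelf $1$, ..., shelf $m$ at the bottom. An outcome is the sequence of choices made for cards $1,\ldots,n$. *)

From mathcomp Require Import all_boot all_order all_algebra all_fingroup.
Set Implicit Arguments. Unset Strict Implicit. Unset Printing Implicit Defensive.
Import Order.TTheory GRing.Theory Num.Theory.

(* Cards / elements of [n] are represented by 'I_n (label k+1 <-> ordinal k).
   A (barred) integer is an int: i >= 0 is unbarred i, -i (i>0) is \bar i. *)

(* Position of x in the order 0 < \bar1 < 1 < \bar2 < 2 < ... *)
Definition zkey (x : int) : nat := (2 * `|x| - (x < 0)%R)%N.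
Definition zlt (x y : int) : bool := (zkey x < zkey y)%N.

Definition barred (x : int) : bool := (x < 0)%R.

Definition inA (n m : nat) (f : {ffun 'I_n -> int}) : Prop :=
  forall i, (`|f i| <= m)%N.

(* i <_pi j, for pi viewed as the total order pi(1) < ... < pi(n) *)
Definition before (n : nat) (pi : 'S_n) (i j : 'I_n) : bool :=
  ((pi^-1)%g i < (pi^-1)%g j)%N.

Definition is_sorting_perm (n : nat) (f : {ffun 'I_n -> int}) (pi : 'S_n) : Prop :=
  forall i j : 'I_n,
    (zlt (f i) (f j) -> before pi i j) /\
    ((i < j)%N -> f i = f j -> ~~ barred (f i) -> before pi i j) /\
    ((i < j)%N -> f i = f j -> barred (f i) -> before pi j i).

(* A choice for one card: (shelf number, placed on top?) *)
Definition choice := (nat * bool)%type.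

Definition valid_outcome (n m : nat) (o : {ffun 'I_n -> choice}) : Prop :=
  forall i, ((o i).1 <= m)%N /\ ((o i).1 = 0%N -> (o i).2 = false).

Definition place (n : nat) (sh : nat -> seq 'I_n) (c : 'I_n) (ch : choice)
  : nat -> seq 'I_n :=
  fun s => if s == ch.1 then (if ch.2 then c :: sh s else rcons (sh s) c)
           else sh s.

Definition shelves (n : nat) (o : {ffun 'I_n -> choice}) : nat -> seq 'I_n :=
  foldl (fun sh c => place sh c (o c)) (fun _ => [::]) (enum 'I_n).

(* final deck, top to bottom: shelf 0, shelf 1, ..., shelf m *)
Definition deck (n m : nat) (o : {ffun 'I_n -> choice}) : seq 'I_n :=
  flatten [seq shelves o s | s <- iota 0 m.+1].

Definition to_outcome (n : nat) (f : {ffun 'I_n -> int}) : {ffun 'I_n -> choice} :=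
  [ffun i => (`|f i|%N, barred (f i))].

From mathcomp Require Import all_boot all_order all_algebra all_fingroup zify.
Set Implicit Arguments. Unset Strict Implicit. Unset Printing Implicit Defensive.

(* Order the cards by the key [zkey (f i) * n.+1 + t i], where the tiebreak
   [t i] is [i] for unbarred and [n - i] for barred values: the conditions
   defining the sorting permutation say exactly that it lists the cards in
   increasing key order. The shuffler puts the cards valued \bar s on top of
   shelf s in order of arrival, hence in decreasing index order, above those
   valued s, which come in increasing index order; as shelves are stacked by
   increasing s, the deck is also sorted by key, and two key-sorted lists of
   the same cards coincide. *)

Lemma zkey_Posz a : zkey a%:Z = a.*2.
Proof. rewrite /zkey /=; lia. Qed.

Lemma zkey_Negz a : zkey (Negz a) = a.*2.+1.
Proof. rewrite /zkey /=; lia. Qed.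

Lemma zkey_inj : injective zkey.
Proof.
by case=> a [] b; rewrite ?zkey_Posz ?zkey_Negz => h; [congr Posz|..|congr Negz]; lia.
Qed.

Lemma zkey_lt_abs x y : (`|x| < `|y|)%N -> (zkey x < zkey y)%N.
Proof. by case: x => a; case: y => b; rewrite ?zkey_Posz ?zkey_Negz /=; lia. Qed.

Lemma zkey_barred_lt x y :
  `|x|%N = `|y|%N -> barred x -> ~~ barred y -> (zkey x < zkey y)%N.
Proof. by case: x => a; case: y => b //=; rewrite zkey_Posz zkey_Negz; lia. Qed.

Definition to_choice (x : int) : choice := (`|x|%N, barred x).
Definition of_choice (c : choice) : int := if c.2 then (- (c.1 : int))%R else c.1.

Lemma to_choiceK : cancel to_choice of_choice.
Proof. by case=> a //=; rewrite NegzE. Qed.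

Lemma of_choiceK (c : choice) : (c.1 = 0 -> c.2 = false) -> to_choice (of_choice c) = c.
Proof. by case: c => -[|s] [] //= h; have := h erefl. Qed.

Lemma pairwise_rev (T : Type) (r : rel T) (s : seq T) :
  pairwise r (rev s) = pairwise (fun x y => r y x) s.
Proof.
by elim: s => //= x s IHs; rewrite rev_cons pairwise_rcons IHs all_rev andbC.
Qed.

Lemma pairwise_enum_ord n (r : rel 'I_n) :
  pairwise r (enum 'I_n) <-> (forall k l : 'I_n, (k < l)%N -> r k l).
Proof.
split=> [r_nth k l lt_kl | r_lt].
  have /(pairwiseP k)/(_ k l) := r_nth.
  by rewrite !nth_ord_enum !inE size_enum_ord; apply.
case: n r r_lt => [|n] r r_lt; first by rewrite enum_ord0.
apply/(pairwiseP ord0) => k l; rewrite !inE size_enum_ord => lt_k lt_l lt_kl.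
have := r_lt (Ordinal lt_k) (Ordinal lt_l) lt_kl.
by rewrite -(nth_ord_enum ord0 (Ordinal lt_k)) -(nth_ord_enum ord0 (Ordinal lt_l)).
Qed.

Lemma pairwise_ltn_enum_ord n : pairwise (fun k l : 'I_n => (k < l)%N) (enum 'I_n).
Proof. exact/pairwise_enum_ord. Qed.

Lemma before_homo_pairwise n (key : 'I_n -> nat) (pi : 'S_n) : injective key ->
  (forall i j, (key i < key j)%N -> before pi i j) <->
  pairwise (relpre key ltn) [seq pi i | i <- enum 'I_n].
Proof.
move=> key_inj; rewrite pairwise_map pairwise_enum_ord /=.
split=> [pi_homo k l lt_kl | pi_sorted i j lt_ij].
  case: ltngtP => // [/pi_homo | /key_inj/perm_inj eq_kl].
    by rewrite /before !permK ltnNge ltnW.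
  by rewrite eq_kl ltnn in lt_kl.
rewrite /before; case: ltngtP => // [/pi_sorted | /val_inj/perm_inj eq_ij].
  by rewrite !permKV ltnNge ltnW.
by rewrite eq_ij ltnn in lt_ij.
Qed.

Lemma foldl_place n (o : 'I_n -> choice) (cs : seq 'I_n) s :
  foldl (fun sh c => place sh c (o c)) (fun=> [::]) cs s =
  rev [seq c <- cs | o c == (s, true)] ++ [seq c <- cs | o c == (s, false)].
Proof.
elim/last_ind: cs s => [//|cs c IHcs] s.
rewrite foldl_rcons /place IHcs !filter_rcons.
case: (o c) => s' [] /=; rewrite !xpair_eqE eq_sym.
all: by case: eqP => //= _; rewrite ?rev_rcons ?rcons_cat.
Qed.

Section SortKey.
Variables (n : nat) (f : {ffun 'I_n -> int}).

Definition tiebreak (i : 'I_n) : nat := if barred (f i) then n - i else i.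
Definition sort_key (i : 'I_n) : nat := zkey (f i) * n.+1 + tiebreak i.
Definition key_lt : rel 'I_n := relpre sort_key ltn.

Lemma key_lt_trans : transitive key_lt.
Proof. exact/relpre_trans/ltn_trans. Qed.

Lemma key_lt_irr : irreflexive key_lt.
Proof. by move=> i; rewrite /key_lt /= ltnn. Qed.

Lemma key_lt_zkey i j : (zkey (f i) < zkey (f j))%N -> key_lt i j.
Proof.
have tiebreak_le k : (tiebreak k <= n)%N.
  by rewrite /tiebreak; case: ifP => _; [exact: leq_subr | exact: ltnW].
by rewrite /key_lt /= /sort_key => lt_ij; move: (tiebreak_le i); nia.
Qed.

Lemma key_lt_eq_val i j : f i = f j ->
  key_lt i j = if barred (f i) then (j < i)%N else (i < j)%N.
Proof.
move=> eq_ij; rewrite /key_lt /= /sort_key /tiebreak -eq_ij ltn_add2l.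
by case: ifP => // _; move: (ltn_ord i) (ltn_ord j); lia.
Qed.

Lemma sort_key_inj : injective sort_key.
Proof.
move=> i j eq_key.
have eq_f : f i = f j.
  apply: zkey_inj; case: (ltngtP (zkey (f i)) (zkey (f j))) => // /key_lt_zkey;
  by rewrite /key_lt /= eq_key ltnn.
apply/val_inj; move: (key_lt_eq_val eq_f) (key_lt_eq_val (esym eq_f)).
rewrite /key_lt /= eq_key ltnn -eq_f.
by case: ifP => _; case: ltngtP.
Qed.

Lemma is_sorting_permE (pi : 'S_n) :
  is_sorting_perm f pi <-> (forall i j, key_lt i j -> before pi i j).
Proof.
split=> [sorting i j lt_ij | homo_pi i j].
  case: (ltngtP (zkey (f i)) (zkey (f j))) => [/(sorting i j).1 //||/zkey_inj eq_f].
    by move/key_lt_zkey/(key_lt_trans lt_ij); rewrite key_lt_irr.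
  move: lt_ij; rewrite (key_lt_eq_val eq_f).
  case: ifP => barred_fi lt_ji.
    by apply: (sorting j i).2.2; rewrite -?eq_f.
  by apply: (sorting i j).2.1; rewrite ?barred_fi.
split; first by move/key_lt_zkey/homo_pi.
split=> lt_ij eq_f barred_fi; apply: homo_pi.
  by rewrite (key_lt_eq_val eq_f) (negbTE barred_fi).
by rewrite (key_lt_eq_val (esym eq_f)) -eq_f barred_fi.
Qed.

End SortKey.

Section Shelves.
Variables (n : nat) (f : {ffun 'I_n -> int}).

Definition shelf_part (s : nat) (top : bool) : seq 'I_n :=
  [seq c <- enum 'I_n | to_choice (f c) == (s, top)].
Definition shelf (s : nat) : seq 'I_n := rev (shelf_part s true) ++ shelf_part s false.

Lemma deckE m : deck m (to_outcome f) = flatten [seq shelf s | s <- iota 0 m.+1].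
Proof.
rewrite /deck; congr flatten; apply: eq_map => s.
by rewrite /shelves foldl_place; congr (rev _ ++ _); apply: eq_filter => c; rewrite ffunE.
Qed.

Lemma mem_shelf_part c s top : (c \in shelf_part s top) = (to_choice (f c) == (s, top)).
Proof. by rewrite mem_filter mem_enum andbT. Qed.

Lemma mem_shelf c s : (c \in shelf s) = (`|f c|%N == s).
Proof.
rewrite mem_cat mem_rev !mem_shelf_part !xpair_eqE /=.
by case: barred; rewrite ?andbT ?andbF ?orbF.
Qed.

Lemma pairwise_shelf_part s top :
  pairwise (if top then fun c d => key_lt f d c else key_lt f) (shelf_part s top).
Proof.
apply: (sub_in_pairwise (P := fun c => to_choice (f c) == (s, top))
                        (r := fun c d : 'I_n => (c < d)%N)); first last.
- exact/pairwise_filter/pairwise_ltn_enum_ord.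
- exact: filter_all.
move=> c d /eqP choice_c /eqP choice_d lt_cd.
have eq_f : f c = f d by apply: (can_inj to_choiceK); rewrite choice_c choice_d.
have barred_c : barred (f c) = top by rewrite [barred _](congr1 snd choice_c).
case: top barred_c {choice_c choice_d} => barred_c.
  by rewrite (key_lt_eq_val (esym eq_f)) -eq_f barred_c.
by rewrite (key_lt_eq_val eq_f) barred_c.
Qed.

Lemma pairwise_shelf s : pairwise (key_lt f) (shelf s).
Proof.
rewrite pairwise_cat pairwise_rev; apply/and3P; split.
- apply/allrelP => c d; rewrite mem_rev !mem_shelf_part.
  move=> /eqP[abs_c barred_c] /eqP[abs_d barred_d].
  by apply/key_lt_zkey/zkey_barred_lt; rewrite ?abs_c ?abs_d ?barred_c ?barred_d.
- exact: (pairwise_shelf_part s true).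
- exact: (pairwise_shelf_part s false).
Qed.

Lemma pairwise_stacked_shelves a k :
  pairwise (key_lt f) (flatten [seq shelf s | s <- iota a k]).
Proof.
elim: k a => [//|k IHk] a /=; rewrite pairwise_cat pairwise_shelf IHk !andbT.
apply/allrelP => c d; rewrite mem_shelf => /eqP abs_c /flatten_mapP[s].
rewrite mem_iota mem_shelf => /andP[lt_as _] /eqP abs_d.
by apply/key_lt_zkey/zkey_lt_abs; rewrite abs_c abs_d.
Qed.

Lemma mem_stacked_shelves m c :
  (`|f c| <= m)%N -> c \in flatten [seq shelf s | s <- iota 0 m.+1].
Proof.
by move=> le_cm; apply/flatten_mapP; exists `|f c|%N; rewrite ?mem_iota ?mem_shelf.
Qed.

Lemma sorting_perm_deckE m (pi : 'S_n) : inA m f ->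
  is_sorting_perm f pi <-> deck m (to_outcome f) = [seq pi i | i <- enum 'I_n].
Proof.
move=> f_in; rewrite deckE is_sorting_permE (before_homo_pairwise _ (@sort_key_inj n f)).
split=> [pi_sorted | <-]; last exact: pairwise_stacked_shelves.
apply: (irr_sorted_eq (@key_lt_trans n f) (@key_lt_irr n f));
  rewrite ?pairwise_sorted ?pairwise_stacked_shelves //.
move=> c; rewrite mem_stacked_shelves ?f_in //; symmetry; apply/mapP.
by exists ((pi^-1)%g c); rewrite ?mem_enum ?permKV.
Qed.

End Shelves.

Theorem proposition2p5 (n m : nat) (hn : (0 < n)%N) (hm : (0 < m)%N) :
  (forall f g : {ffun 'I_n -> int},
     inA m f -> inA m g -> to_outcome f = to_outcome g -> f = g) /\
  (forall f : {ffun 'I_n -> int}, inA m f -> valid_outcome m (to_outcome f)) /\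
  (forall o : {ffun 'I_n -> choice},
     valid_outcome m o -> exists2 f, inA m f & to_outcome f = o) /\
  (forall f : {ffun 'I_n -> int}, inA m f -> forall pi : 'S_n,
     is_sorting_perm f pi <-> deck m (to_outcome f) = [seq pi i | i <- enum 'I_n]).
Proof.
split=> [f g _ _ eq_fg | ].
  apply/ffunP => i; apply: (can_inj to_choiceK).
  by have := congr1 (fun o : {ffun _ -> choice} => o i) eq_fg; rewrite !ffunE.
split=> [f f_in i | ].
  by rewrite ffunE; split; [exact: f_in | case: (f i)].
split=> [o o_valid | f f_in pi]; last exact: sorting_perm_deckE.
have o_of_choiceK i : to_choice (of_choice (o i)) = o i.
  exact: (of_choiceK (o_valid i).2).
exists [ffun i => of_choice (o i)] => [i | ].
  by rewrite ffunE; have /= -> := congr1 fst (o_of_choiceK i); exact: (o_valid i).1.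
by apply/ffunP => i; rewrite !ffunE; exact: o_of_choiceK.
Qed.
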